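(* Let $q\ge3$ be an integer and $\beta>0$ with $2\pi^2-\beta\pi^2+\beta q^2\sin^2(\frac{\pi}{q})\ne0$. Put $$c_1=\frac{4\beta\pi\sin^2(\frac{\pi}{q})}{2\pi^2-\beta\pi^2+\beta q^2\sin^2(\frac{\pi}{q})},\qquad c_2=\frac{2\beta q\sin^2(\frac{\pi}{q})}{2\pi^2-\beta\pi^2+\beta q^2\sin^2(\frac{\pi}{q})},$$ and let $\tilde M$ be the $q\times q$ matrix with entries ($i,j\in\{1,\dots,q\}$, index differences mod $q$) $$\tilde M(i,j)=\frac{q}{2\pi}\Big(\delta_{j=i-1}-\delta_{j=i}+c_1\sin\big(\tfrac{2\pi}{q}(i-j)\big)+c_2\big[\cos\big(\tfrac{2\pi}{q}(i-j)\big)-\cos\big(\tfrac{2\pi}{q}(i-j-1)\big)\big]\Big).$$ Then the eigenvalues of $\tilde M$ are $\lambda_1=\frac{q}{2\pi}\Big(\big(c_2\tfrac q2-1\big)\big(1-\cos\tfrac{2\pi}{q}\big)+i\big[\big(c_2\tfrac q2-1\big)\sin\tfrac{2\pi}{q}-c_1\tfrac q2\big]\Big)$, $\lambda_{q-1}=\overline{\lambda_1}$, $\lambda_j=\frac{q}{2\pi}\Big(\big[\cos\tfrac{2\pi j}{q}-1\big]-i\sin\tfrac{2\pi j}{q}\Big)$ for $j\in\{2,\dots,q-2\}$, and $\lambda_q=0$. *)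

From HB Require Import structures.
From mathcomp Require Import all_boot all_order all_algebra.
From mathcomp Require Import all_classical all_reals all_analysis.
From mathcomp Require Import complex.
Set Implicit Arguments. Unset Strict Implicit. Unset Printing Implicit Defensive.
Import Order.TTheory GRing.Theory Num.Theory.
Local Open Scope ring_scope.

Section Defs.
Variables (R : realType) (q : nat) (beta : R).

Definition den : R :=
  2 * pi ^+ 2 - beta * pi ^+ 2 + beta * (q%:R) ^+ 2 * (sin (pi / q%:R)) ^+ 2.

Definition c1 : R := 4 * beta * pi * (sin (pi / q%:R)) ^+ 2 / den.
Definition c2 : R := 2 * beta * q%:R * (sin (pi / q%:R)) ^+ 2 / den.

(* Matrix Mtilde with 0-based indices i, j : 'I_q (paper: 1..q; only
   differences mod q matter).  delta_{j = i-1 mod q} is (j+1) mod q == i. *)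
Definition Mtilde : 'M[R]_q :=
  \matrix_(i < q, j < q)
    (q%:R / (2 * pi) *
     ( (((j.+1 %% q)%N == i)%:R) - ((j == i)%:R)
       + c1 * sin (2 * pi / q%:R * (i%:R - j%:R))
       + c2 * ( cos (2 * pi / q%:R * (i%:R - j%:R))
              - cos (2 * pi / q%:R * (i%:R - j%:R - 1)) ) )).

Definition re1 : R :=
  q%:R / (2 * pi) * ((c2 * q%:R / 2 - 1) * (1 - cos (2 * pi / q%:R))).
Definition im1 : R :=
  q%:R / (2 * pi) * ((c2 * q%:R / 2 - 1) * sin (2 * pi / q%:R) - c1 * q%:R / 2).

Definition lam (j : nat) : R[i] :=
  if j == 1%N then Complex re1 im1
  else if j == q.-1 then Complex re1 (- im1)
  else if j == q then 0
  else Complex (q%:R / (2 * pi) * (cos (2 * pi * j%:R / q%:R) - 1))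
               (q%:R / (2 * pi) * (- sin (2 * pi * j%:R / q%:R))).
End Defs.

From HB Require Import structures.
From mathcomp Require Import all_boot all_order all_algebra.
From mathcomp Require Import all_classical all_reals all_analysis.
From mathcomp Require Import complex ring lra zify.
Set Implicit Arguments. Unset Strict Implicit. Unset Printing Implicit Defensive.
Import Order.TTheory GRing.Theory Num.Theory.
Local Open Scope ring_scope.

(** With w = exp(2 pi i / q), P the cyclic shift and u_z = (z^i)_i, the
    complexified matrix Mtilde is circulant of the form
      a (P - 1) + alpha u_w u_w^* + beta u_(w^-1) u_(w^-1)^*,
    because sin and cos of 2 pi (i - j) / q are combinations of w^(i-j) and
    w^(j-i).  The columns (w^(im))_i of the Fourier matrix are common
    eigenvectors of P and of both rank-one terms, with eigenvalues w^(-m),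
    q [m = 1] and q [m = q - 1].  The Fourier matrix is an invertible
    Vandermonde matrix, so Mtilde is similar to the diagonal matrix of these
    eigenvalues, which are the lambda_m of the statement. *)

Lemma char_poly_conj (K : comUnitRingType) n (A P : 'M[K]_n) :
  P \in unitmx -> char_poly (invmx P *m A *m P) = char_poly A.
Proof.
move=> Punit; set Q := invmx P.
have QP : map_mx polyC Q *m map_mx polyC P = 1%:M.
  by rewrite -map_mxM mulVmx // map_mx1.
have XQP : ('X%:M : 'M[{poly K}]_n) = map_mx polyC Q *m 'X%:M *m map_mx polyC P.
  by rewrite scalar_mxC -mulmxA QP mulmx1.
rewrite /char_poly /char_poly_mx !map_mxM [in LHS]XQP -mulmxBl -mulmxBr.
by rewrite !det_mulmx mulrAC -det_mulmx QP det1 mul1r.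
Qed.

Lemma char_poly_diag_similar (K : comUnitRingType) n (A P : 'M[K]_n)
    (d : 'rV[K]_n) :
  P \in unitmx -> A *m P = P *m diag_mx d ->
  char_poly A = \prod_(i < n) ('X - (d 0 i)%:P).
Proof.
move=> Punit AP; rewrite -(char_poly_conj A Punit) -mulmxA AP mulmxA mulVmx //.
rewrite mul1mx char_poly_trig ?diag_mx_is_trig //.
by apply: eq_bigr => i _; rewrite mxE eqxx mulr1n.
Qed.

Lemma sum_expr_unity_root (K : idomainType) n (z : K) : z ^+ n = 1 ->
  \sum_(j < n) z ^+ j = if z == 1 then n%:R else 0.
Proof.
move=> zn1; have [->|z_neq1] := eqVneq z 1.
  by rewrite (eq_bigr (fun=> 1)) ?sumr_const ?card_ord // => j _; rewrite expr1n.
have : (z - 1) * \sum_(j < n) z ^+ j = 0 by rewrite -subrX1 zn1 subrr.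
by move/eqP; rewrite mulf_eq0 subr_eq0 (negbTE z_neq1) => /eqP.
Qed.

Lemma big_ord_shift_cyclic (R : Type) (idx : R) (op : Monoid.com_law idx) n
    (F : nat -> R) :
  F 0%N = F n -> \big[op/idx]_(i < n) F i = \big[op/idx]_(1 <= i < n.+1) F i.
Proof.
move=> F0n; rewrite -(big_mkord xpredT); case: n F0n => [|n] F0n.
  by rewrite !big_geq.
by rewrite big_nat_recl // big_nat_recr //= F0n Monoid.mulmC big_add1.
Qed.

Definition fourier_mx {K : nzRingType} n (w : K) : 'M[K]_n :=
  \matrix_(i, m) w ^+ (i * m).

Definition cyclic_shift_mx {K : nzRingType} n : 'M[K]_n :=
  \matrix_(i, j) ((j.+1 %% n)%N == i)%:R.

Definition geom_outer_mx {K : fieldType} n (z : K) : 'M[K]_n :=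
  \matrix_(i, j) (z ^+ i / z ^+ j).

Section FourierDiagonalization.
Variables (K : fieldType) (n : nat) (w : K).
Hypothesis w_prim : n.-primitive_root w.

Local Notation F := (fourier_mx n w).

Lemma fourier_mx_unit : F \in unitmx.
Proof.
have -> : F = Vandermonde n (\row_(m < n) w ^+ m).
  by apply/matrixP => i m; rewrite !mxE -exprM mulnC.
rewrite unitmxE det_Vandermonde unitfE.
apply/prodf_neq0 => i _; apply/prodf_neq0 => j ij.
by rewrite !mxE subr_eq0 (eq_prim_root_expr w_prim) !modn_small ?gtn_eqF.
Qed.

Let w_neq0 : w != 0.
Proof. by rewrite (prim_root_eq0 w_prim) -lt0n (prim_order_gt0 w_prim). Qed.

Lemma mul_cyclic_shift_fourier :
  cyclic_shift_mx n *m F = F *m diag_mx (\row_m w^-1 ^+ m).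
Proof.
apply/matrixP => i m; rewrite mul_mx_diag !mxE.
rewrite (reindex_inj (@ord_pred_inj n)) /=.
rewrite (eq_bigr (fun k => (k == i)%:R * w ^+ (ord_pred k * m))); last first.
  by move=> k _; rewrite !mxE -[X in X == i](ord_predK k).
rewrite (bigD1 i) //= eqxx mul1r big1 ?addr0; last first.
  by move=> k /negbTE ->; rewrite mul0r.
have pred_i : w ^+ (ord_pred i) = w ^+ i / w.
  apply: (mulIf w_neq0); rewrite mulfVK //= (prim_expr_mod w_prim) -exprSr.
  rewrite prednK ?addn_gt0 ?(prim_order_gt0 w_prim) ?orbT //.
  by rewrite exprD (prim_expr_order w_prim) mulr1.
by rewrite exprM [w ^+ _]pred_i exprMn -exprM.
Qed.

Lemma mul_geom_outer_fourier z : z ^+ n = 1 ->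
  geom_outer_mx n z *m F = F *m diag_mx (\row_m ((w ^+ m == z)%:R * n%:R)).
Proof.
move=> zn1; have z_neq0 : z != 0.
  apply: contra_eq_neq zn1 => ->.
  by rewrite expr0n gtn_eqF ?(prim_order_gt0 w_prim) // eq_sym oner_eq0.
apply/matrixP => i m; rewrite mul_mx_diag !mxE.
under eq_bigr do rewrite !mxE -mulrA -exprVn mulnC exprM -exprMn.
rewrite -mulr_sumr sum_expr_unity_root; last first.
  by rewrite exprMn exprVn zn1 exprAC (prim_expr_order w_prim) invr1 expr1n mul1r.
have -> : (z^-1 * w ^+ m == 1) = (w ^+ m == z).
  by rewrite mulrC -(mulfV z_neq0) (can_eq (mulfVK z_neq0)).
have [<-|_] := eqVneq (w ^+ m) z; last by rewrite mulr0n mul0r !mulr0.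
by rewrite mul1r -exprM mulnC.
Qed.

Lemma mul_circulant_fourier (s al be z1 z2 : K) : z1 ^+ n = 1 -> z2 ^+ n = 1 ->
  \matrix_(i, j) (s * (((j.+1 %% n)%N == i)%:R - (j == i)%:R)
                  + al * (z1 ^+ i / z1 ^+ j) + be * (z2 ^+ i / z2 ^+ j)) *m F
  = F *m diag_mx (\row_m (s * (w^-1 ^+ m - 1)
                          + al * ((w ^+ m == z1)%:R * n%:R)
                          + be * ((w ^+ m == z2)%:R * n%:R))).
Proof.
move=> z1n1 z2n1.
have -> : \matrix_(i, j) (s * (((j.+1 %% n)%N == i)%:R - (j == i)%:R)
                  + al * (z1 ^+ i / z1 ^+ j) + be * (z2 ^+ i / z2 ^+ j))
   = s *: (cyclic_shift_mx n - 1%:M) + al *: geom_outer_mx n z1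
     + be *: geom_outer_mx n z2.
  by apply/matrixP => i j; rewrite !mxE [i == j]eq_sym.
rewrite !mulmxDl -!scalemxAl mulmxBl mul1mx mul_cyclic_shift_fourier.
rewrite !mul_geom_outer_fourier // !mul_mx_diag.
by apply/matrixP => i m; rewrite !mxE; ring.
Qed.

End FourierDiagonalization.

Section ComplexExponential.
Variable R : realType.

Definition expi (x : R) : R[i] := Complex (cos x) (sin x).

Lemma expi0 : expi 0 = 1.
Proof. by rewrite /expi cos0 sin0. Qed.

Lemma expiD x y : expi (x + y) = expi x * expi y.
Proof. by rewrite /expi cosD sinD; simpc; congr Complex; ring. Qed.

Lemma expiN x : expi (- x) = (expi x)^-1.
Proof. by apply/esym/mulr1_eq; rewrite -expiD subrr expi0. Qed.

Lemma expiX x k : expi x ^+ k = expi (x * k%:R).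
Proof.
elim: k => [|k IHk]; first by rewrite mulr0 expi0.
by rewrite exprS IHk -expiD -natr1 mulrDr mulr1 addrC.
Qed.

Lemma expi_neq1 x : 0 < x < 2 * pi -> expi x != 1.
Proof.
move=> /andP[x_gt0 x_lt2pi]; apply/eqP => -[cos_x _].
have sin_half_gt0 : 0 < sin (x / 2) by apply: sin_gt0_pi; apply/andP; split; lra.
have : cos x = 1 - 2 * sin (x / 2) ^+ 2.
  by rewrite {1}(splitr x) -mulr2n cos_mulr2n cos2sin2; ring.
nra.
Qed.

Lemma prim_root_expi n : (0 < n)%N -> n.-primitive_root (expi (2 * pi / n%:R)).
Proof.
move=> n_gt0; have n_pos : (0 : R) < n%:R by rewrite ltr0n.
have wn1 : expi (2 * pi / n%:R) ^+ n = 1.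
  by rewrite expiX divfK ?gt_eqF // mulr_natl /expi cos2pi sin2pi.
have [m m_prim m_dvd_n] := prim_order_exists n_gt0 wn1.
have m_gt0 := prim_order_gt0 m_prim.
have m_eq_n : m = n; last by rewrite m_eq_n in m_prim.
apply/eqP; rewrite eqn_leq dvdn_leq //= leqNgt; apply/negP => m_lt_n.
move: (prim_expr_order m_prim); rewrite expiX; apply/eqP/expi_neq1.
rewrite mulrAC divr_gt0 ?mulr_gt0 ?pi_gt0 ?ltr0n //=.
by rewrite ltr_pdivrMr // ltr_pM2l ?mulr_gt0 ?pi_gt0 ?ltr_nat.
Qed.

End ComplexExponential.

Local Open Scope complex_scope.

Section MtildeSpectrum.
Variables (R : realType) (q : nat) (beta : R).
Hypothesis q_ge3 : (3 <= q)%N.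

Local Notation theta := (2 * pi / q%:R : R).
Local Notation w := (expi theta).
Local Notation a := ((q%:R / (2 * pi) : R)%:C).

(* With E = w^(i-j): sin (theta (i-j)) = (E - E^-1) / 2i and
   cos (theta (i-j)) - cos (theta (i-j-1)) = E (1 - w^-1) / 2 + E^-1 (1 - w) / 2. *)
Definition mtilde_alpha : R[i] :=
  a * (Complex 0 (- c1 q beta / 2) + (c2 q beta / 2)%:C * (1 - w^-1)).
Definition mtilde_beta : R[i] :=
  a * (Complex 0 (c1 q beta / 2) + (c2 q beta / 2)%:C * (1 - w)).

Lemma Mtilde_circulant :
  map_mx (fun x : R => Complex x 0) (Mtilde q beta)
  = \matrix_(i, j) (a * (((j.+1 %% q)%N == i)%:R - (j == i)%:R)
                   + mtilde_alpha * (w ^+ i / w ^+ j)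
                   + mtilde_beta * (w^-1 ^+ i / w^-1 ^+ j)).
Proof.
apply/matrixP => i j; rewrite !mxE !exprVn invrK !expiX -!expiN -!expiD.
set d := theta * (i%:R - j%:R).
have -> : theta * (i%:R - j%:R - 1) = d - theta by rewrite /d; ring.
have -> : theta * i%:R + - (theta * j%:R) = d by rewrite /d; ring.
have -> : - (theta * i%:R) + theta * j%:R = - d by rewrite /d; ring.
rewrite /mtilde_alpha /mtilde_beta -expiN /expi cosB !sinN !cosN.
rewrite -!(rmorph_nat (real_complex R)); simpc.
by congr Complex; move: (q%:R / (2 * pi)) => k; field.
Qed.

Lemma Mtilde_eigenvalue (m : 'I_q) :
  a * (w^-1 ^+ m - 1) + mtilde_alpha * ((w ^+ m == w)%:R * q%:R)
  + mtilde_beta * ((w ^+ m == w^-1)%:R * q%:R) = lam q beta m.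
Proof.
have q_gt0 : (0 < q)%N by lia.
have w_prim := prim_root_expi R q_gt0.
have w_inv : w^-1 = w ^+ q.-1.
  by apply: mulr1_eq; rewrite -exprS prednK // (prim_expr_order w_prim).
have m_lt_q := ltn_ord m.
have -> : (w ^+ m == w) = (m == 1%N :> nat).
  by rewrite -[X in _ == X]expr1 (eq_prim_root_expr w_prim) !modn_small //; lia.
have -> : (w ^+ m == w^-1) = (m == q.-1 :> nat).
  by rewrite w_inv (eq_prim_root_expr w_prim) !modn_small //; lia.
rewrite /lam /mtilde_alpha /mtilde_beta /re1 /im1 -!expiN.
have [m1|m_neq1] := eqVneq (m : nat) 1%N.
  rewrite m1; have -> : (1 == q.-1)%N = false by apply/eqP; lia.
  rewrite /expi -!(rmorph_nat (real_complex R)); simpc.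
  by rewrite cosN sinN; congr Complex; move: (q%:R / (2 * pi)) => k; field.
have [mq|m_neqq] := eqVneq (m : nat) q.-1.
  have wqm1 : expi (- theta) ^+ q.-1 = w by rewrite expiN exprVn -w_inv invrK.
  rewrite mq wqm1 /expi -!(rmorph_nat (real_complex R)); simpc.
  by congr Complex; move: (q%:R / (2 * pi)) => k; field.
have -> : (m == q :> nat) = false by apply/eqP; lia.
have -> : 2 * pi * m%:R / q%:R = theta * m%:R by ring.
rewrite mulr0n !mul0r !mulr0 !addr0 expiX mulNr /expi cosN sinN; simpc.
by congr Complex; ring.
Qed.

Lemma Mtilde_fourier :
  map_mx (fun x : R => Complex x 0) (Mtilde q beta) *m fourier_mx q w
  = fourier_mx q w *m diag_mx (\row_(m < q) lam q beta m).
Proof.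
have w_prim := prim_root_expi R (ltnW (ltnW q_ge3)).
rewrite Mtilde_circulant (mul_circulant_fourier w_prim); first last.
- by rewrite exprVn (prim_expr_order w_prim) invr1.
- exact: prim_expr_order w_prim.
by congr (_ *m diag_mx _); apply/rowP => m; rewrite !mxE Mtilde_eigenvalue.
Qed.

(* The paper's eigenvalue lambda_q = 0 sits in column 0 of the Fourier matrix. *)
Lemma lam_0_q : lam q beta 0 = lam q beta q.
Proof.
have [q_neq1 q_neq_q1 q1_neq0 q_neq0] :
    [/\ q != 1, q != q.-1, q.-1 != 0 & q != 0]%N by split; apply/eqP; lia.
rewrite /lam eqxx (negbTE q_neq1) (negbTE q_neq_q1) ![0%N == _]eq_sym.
rewrite (negbTE q1_neq0) (negbTE q_neq0) mulr0 mul0r cos0 sin0 subrr oppr0.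
by rewrite !mulr0.
Qed.

End MtildeSpectrum.

Theorem lemma3p2 (R : realType) (q : nat) (beta : R)
  (hq : (3 <= q)%N) (hbeta : 0 < beta) (hden : den q beta != 0) :
  char_poly (map_mx (fun x : R => Complex x 0) (Mtilde q beta))
  = \prod_(1 <= j < q.+1) ('X - (lam q beta j)%:P).
Proof.
have w_prim := prim_root_expi R (ltnW (ltnW hq)).
rewrite (char_poly_diag_similar (fourier_mx_unit w_prim) (Mtilde_fourier beta hq)).
rewrite (eq_bigr (fun i : 'I_q => 'X - (lam q beta i)%:P)); last by move=> i; rewrite mxE.
by apply: (@big_ord_shift_cyclic _ 1 *%R q (fun j => 'X - (lam q beta j)%:P)); rewrite lam_0_q.
Qed.
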